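(* Let $B$ and $C$ be groups with $C$ abelian, and let $\phi: C\to \mathrm{Aut}(B)$, $c\mapsto\phi_c$, and $\psi: B\to\mathrm{Aut}(C)$, $b\mapsto\psi_b$, be homomorphisms such that $\phi_{\psi_b(c)} = \phi_c$ for all $b\in B$, $c\in C$. On $A = B\times C$ define \[ (b_1,c_1)\cdot(b_2,c_2) = (b_1\phi_{c_1}(b_2),\, c_1c_2),\qquad (b_1,c_1)\circ(b_2,c_2) = (b_1b_2,\, c_1\psi_{b_1}(c_2)). \] Then $(A,\cdot,\circ)$ is a skew brace, i.e. $a_1\circ(a_2\cdot a_3) = (a_1\circ a_2)\cdot a_1^{-1}\cdot(a_1\circ a_3)$ for all $a_1,a_2,a_3\in A$, where $a_1^{-1}$ is the inverse in $(A,\cdot)$.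
   Context: A skew brace is a set $A$ with two group operations $\cdot$ and $\circ$ such that $a\circ(b\cdot c) = (a\circ b)\cdot a^{-1}\cdot (a\circ c)$ for all $a,b,c\in A$. Note $(A,\cdot)=B\rtimes_\phi C$ and $(A,\circ)=B\ltimes_\psi C$ are groups. *)

Definition is_group {T : Type} (mul : T -> T -> T) (one : T) (inv : T -> T) : Prop :=
  (forall x y z, mul x (mul y z) = mul (mul x y) z) /\
  (forall x, mul one x = x /\ mul x one = x) /\
  (forall x, mul x (inv x) = one /\ mul (inv x) x = one).

Definition is_abelian {T : Type} (mul : T -> T -> T) : Prop :=
  forall x y, mul x y = mul y x.

Definition is_aut {T : Type} (mul : T -> T -> T) (f : T -> T) : Prop :=
  (forall x y, f (mul x y) = mul (f x) (f y)) /\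
  (exists g : T -> T, (forall x, g (f x) = x) /\ (forall x, f (g x) = x)).

Definition is_aut_hom {G T : Type} (mulG : G -> G -> G) (mulT : T -> T -> T)
  (act : G -> T -> T) : Prop :=
  (forall g, is_aut mulT (act g)) /\
  (forall g1 g2 x, act (mulG g1 g2) x = act g1 (act g2 x)).

Section Ops.
Context {B C : Type} (mulB : B -> B -> B) (oneB : B) (invB : B -> B)
  (mulC : C -> C -> C) (oneC : C) (invC : C -> C)
  (phi : C -> B -> B) (psi : B -> C -> C).

Definition dotA (a1 a2 : B * C) : B * C :=
  (mulB (fst a1) (phi (snd a1) (fst a2)), mulC (snd a1) (snd a2)).
Definition circA (a1 a2 : B * C) : B * C :=
  (mulB (fst a1) (fst a2), mulC (snd a1) (psi (fst a1) (snd a2))).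
Definition oneA : B * C := (oneB, oneC).
Definition dotinvA (a : B * C) : B * C := (phi (invC (snd a)) (invB (fst a)), invC (snd a)).
Definition circinvA (a : B * C) : B * C := (invB (fst a), psi (invB (fst a)) (invC (snd a))).
End Ops.

Definition is_skew_brace {A : Type} (dot : A -> A -> A) (one : A) (inv : A -> A)
  (circ : A -> A -> A) (cone : A) (cinv : A -> A) : Prop :=
  is_group dot one inv /\ is_group circ cone cinv /\
  (forall a1 a2 a3, circ a1 (dot a2 a3) = dot (dot (circ a1 a2) (inv a1)) (circ a1 a3)).


(* The additive structure (A, .) is the semidirect product B ⋊_phi C and the
   multiplicative structure (A, o) is B ⋉_psi C.  The second group
   law is the same construction with the roles of B and C exchanged, so it is
   obtained by transporting the first result along the coordinate swap
   B * C -> C * B.  Finally, the brace identity is a direct computation in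
   coordinates: in the first coordinate the twisting automorphism collapses
   because C is abelian (conjugation by c1 is trivial) and phi does not see
   psi (phi_{psi_b(c)} = phi_c); in the second coordinate commutativity of C
   suffices. *)

Section GroupFacts.
Context {T : Type} {mul : T -> T -> T} {one : T} {inv : T -> T}.
Hypothesis group_T : is_group mul one inv.

Lemma mulA x y z : mul x (mul y z) = mul (mul x y) z.
Proof. exact (proj1 group_T x y z). Qed.

Lemma mul1l x : mul one x = x.
Proof. exact (proj1 (proj1 (proj2 group_T) x)). Qed.

Lemma mul1r x : mul x one = x.
Proof. exact (proj2 (proj1 (proj2 group_T) x)). Qed.

Lemma mulVr x : mul x (inv x) = one.
Proof. exact (proj1 (proj2 (proj2 group_T) x)). Qed.

Lemma mulVl x : mul (inv x) x = one.
Proof. exact (proj2 (proj2 (proj2 group_T) x)). Qed.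

Lemma idempotent_one e : mul e e = e -> e = one.
Proof.
  intro Hee.
  transitivity (mul (mul (inv e) e) e).
  - rewrite mulVl, mul1l. reflexivity.
  - rewrite <- mulA, Hee. apply mulVl.
Qed.

Lemma hom_one (f : T -> T) :
  (forall x y, f (mul x y) = mul (f x) (f y)) -> f one = one.
Proof. intro Hf. apply idempotent_one. rewrite <- Hf, mul1l. reflexivity. Qed.

Lemma abelian_conj x y : is_abelian mul -> mul (mul x y) (inv x) = y.
Proof. intro Hab. rewrite (Hab x y), <- mulA, mulVr, mul1r. reflexivity. Qed.

End GroupFacts.

Section Actions.
Context {G T : Type} {mulG : G -> G -> G} {oneG : G} {invG : G -> G}
  {mulT : T -> T -> T} {oneT : T} {invT : T -> T} {act : G -> T -> T}.
Hypothesis group_G : is_group mulG oneG invG.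
Hypothesis group_T : is_group mulT oneT invT.
Hypothesis act_hom : is_aut_hom mulG mulT act.

Lemma act_mul g x y : act g (mulT x y) = mulT (act g x) (act g y).
Proof. exact (proj1 (proj1 act_hom g) x y). Qed.

Lemma act_comp g h x : act (mulG g h) x = act g (act h x).
Proof. exact (proj2 act_hom g h x). Qed.

Lemma act_oneT g : act g oneT = oneT.
Proof. apply (hom_one group_T). apply act_mul. Qed.

(* The identity of G acts trivially: act oneG is an idempotent bijection. *)
Lemma act_oneG x : act oneG x = x.
Proof.
  destruct (proj2 (proj1 act_hom oneG)) as [g [g_act _]].
  rewrite <- (g_act (act oneG x)), <- act_comp, (mul1l group_G).
  apply g_act.
Qed.

Lemma act_invG g x : act g (act (invG g) x) = x.
Proof. rewrite <- act_comp, (mulVr group_G). apply act_oneG. Qed.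

Theorem semidirect_group :
  is_group (dotA mulT mulG act) (oneA oneT oneG) (dotinvA invT invG act).
Proof.
  unfold dotA, oneA, dotinvA; split; [|split].
  - intros [x1 g1] [x2 g2] [x3 g3]; simpl.
    rewrite act_mul, act_comp, !(mulA group_T), !(mulA group_G).
    reflexivity.
  - intros [x g]; simpl.
    rewrite act_oneG, act_oneT, !(mul1l group_T), !(mul1r group_T),
      !(mul1l group_G), !(mul1r group_G).
    split; reflexivity.
  - intros [x g]; simpl.
    rewrite act_invG, (mulVr group_T), (mulVr group_G),
      (mulVl group_G), <- act_mul, (mulVl group_T), act_oneT.
    split; reflexivity.
Qed.

End Actions.

Lemma is_group_transport {T U : Type} (mul : T -> T -> T) (one : T) (inv : T -> T)
  (s : U -> T) (s' : T -> U)
  (mul' : U -> U -> U) (one' : U) (inv' : U -> U) :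
  is_group mul one inv ->
  (forall u, s' (s u) = u) -> (forall t, s (s' t) = t) ->
  (forall x y, mul' x y = s' (mul (s x) (s y))) ->
  one' = s' one ->
  (forall x, inv' x = s' (inv (s x))) ->
  is_group mul' one' inv'.
Proof.
  intros group_T s's ss' Hmul Hone Hinv.
  split; [|split]; intros; rewrite ?Hmul, ?Hone, ?Hinv, !ss'.
  - rewrite (mulA group_T). reflexivity.
  - rewrite (mul1l group_T), (mul1r group_T), s's. split; reflexivity.
  - rewrite (mulVr group_T), (mulVl group_T). split; reflexivity.
Qed.

Definition swap {X Y : Type} (p : X * Y) : Y * X := (snd p, fst p).

(* The second group law is the semidirect product C ⋊_psi B read through the
   coordinate swap. *)
Lemma circ_group {B C : Type}
  {mulB : B -> B -> B} {oneB : B} {invB : B -> B}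
  {mulC : C -> C -> C} {oneC : C} {invC : C -> C} {psi : B -> C -> C} :
  is_group mulB oneB invB -> is_group mulC oneC invC ->
  is_aut_hom mulB mulC psi ->
  is_group (circA mulB mulC psi) (oneA oneB oneC) (circinvA invB invC psi).
Proof.
  intros group_B group_C psi_hom.
  apply (is_group_transport _ _ _ swap swap _ _ _
           (semidirect_group group_B group_C psi_hom));
    intros; repeat match goal with p : _ * _ |- _ => destruct p end; reflexivity.
Qed.

Section BraceIdentity.
Context {B C : Type} {mulB : B -> B -> B} {oneB : B} {invB : B -> B}
  {mulC : C -> C -> C} {oneC : C} {invC : C -> C}
  {phi : C -> B -> B} {psi : B -> C -> C}.
Hypothesis group_B : is_group mulB oneB invB.
Hypothesis group_C : is_group mulC oneC invC.
Hypothesis abelian_C : is_abelian mulC.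
Hypothesis phi_hom : is_aut_hom mulC mulB phi.
Hypothesis psi_hom : is_aut_hom mulB mulC psi.
Hypothesis phi_psi : forall b c x, phi (psi b c) x = phi c x.

Let dot := dotA mulB mulC phi.
Let circ := circA mulB mulC psi.
Let dotinv := dotinvA invB invC phi.

Lemma brace_identity a1 a2 a3 :
  circ a1 (dot a2 a3) = dot (dot (circ a1 a2) (dotinv a1)) (circ a1 a3).
Proof.
  destruct a1 as [b1 c1], a2 as [b2 c2], a3 as [b3 c3].
  unfold dot, circ, dotinv, dotA, circA, dotinvA; simpl.
  assert (conj_c1 : mulC (mulC c1 (psi b1 c2)) (invC c1) = psi b1 c2)
    by exact (abelian_conj group_C _ _ abelian_C).
  f_equal.
  - (* the twist by c1 psi_{b1}(c2) c1^{-1} reduces to phi_{c2} *)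
    rewrite <- !(act_comp phi_hom), conj_c1, !phi_psi,
      <- (mulA group_B (mulB b1 b2)), <- (act_mul phi_hom),
      (mulA group_B (invB b1)), (mulVl group_B), (mul1l group_B),
      (mulA group_B).
    reflexivity.
  - rewrite conj_c1, (act_mul psi_hom), !(mulA group_C),
      (abelian_C c1 (psi b1 c2)).
    reflexivity.
Qed.

End BraceIdentity.

Theorem lemma8p1 (B C : Type)
  (mulB : B -> B -> B) (oneB : B) (invB : B -> B)
  (mulC : C -> C -> C) (oneC : C) (invC : C -> C)
  (phi : C -> B -> B) (psi : B -> C -> C) :
  is_group mulB oneB invB ->
  is_group mulC oneC invC ->
  is_abelian mulC ->
  is_aut_hom mulC mulB phi ->
  is_aut_hom mulB mulC psi ->
  (forall b c x, phi (psi b c) x = phi c x) ->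
  is_skew_brace
    (dotA mulB mulC phi) (oneA oneB oneC) (dotinvA invB invC phi)
    (circA mulB mulC psi) (oneA oneB oneC) (circinvA invB invC psi).
Proof.
  intros group_B group_C abelian_C phi_hom psi_hom phi_psi.
  split; [|split].
  - exact (semidirect_group group_C group_B phi_hom).
  - exact (circ_group group_B group_C psi_hom).
  - exact (brace_identity group_B group_C abelian_C
             phi_hom psi_hom phi_psi).
Qed.
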